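(* Let $\Lambda$ be an Artin algebra, $\omega$ a $\Lambda$-module, and $M=M_1\oplus M_2$ a $\Lambda$-module. Then $\mathrm{l.app}_\omega M_1\ge\mathrm{l.app}_\omega M$.
   Context: All modules are finitely generated left modules. $\mathrm{add}\,\omega$ is the class of direct summands of finite direct sums of copies of $\omega$; a map $f:Z\to\omega_0$ with $\omega_0\in\mathrm{add}\,\omega$ is a left $\mathrm{add}\,\omega$-approximation if every map from $Z$ to a module in $\mathrm{add}\,\omega$ factors through $f$. For a module $Z$, $\mathrm{l.app}_\omega Z$ is the largest positive integer $m$ (or $\infty$) such that a complex $0\to Z\xrightarrow{f_1}\omega_1\xrightarrow{f_2}\omega_2\to\cdots$ with $\omega_i\in\mathrm{add}\,\omega$ and each $\mathrm{Im} f_i\hookrightarrow\omega_i$ a left $\mathrm{add}\,\omega$-approximation of $\mathrm{Im} f_i$ is exact up to $\omega_m$ (resp. everywhere). *)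

From HB Require Import structures.
From mathcomp Require Import all_boot all_order all_algebra.
Set Implicit Arguments. Unset Strict Implicit. Unset Printing Implicit Defensive.
Import GRing.Theory.
Local Open Scope ring_scope.

Definition is_ideal (K : comPzRingType) (I : K -> Prop) : Prop :=
  [/\ I 0, (forall x y, I x -> I y -> I (x + y)) & (forall a x, I x -> I (a * x))].

Definition artinian_ring (K : comPzRingType) : Prop :=
  forall I : nat -> K -> Prop,
    (forall n, is_ideal (I n)) ->
    (forall n x, I n.+1 x -> I n x) ->
    exists N, forall n, (N <= n)%N -> forall x, I n x -> I N x.

Definition artin_algebra (R : pzRingType) : Prop :=
  exists (K : comPzRingType) (phi : {rmorphism K -> R}),
    [/\ artinian_ring K,
        (forall k r, phi k * r = r * phi k) &
        exists (n : nat) (g : 'I_n -> R),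
          forall r, exists c : 'I_n -> K, r = \sum_(i < n) phi (c i) * g i].

Definition fin_gen (R : pzRingType) (V : lmodType R) : Prop :=
  exists (n : nat) (g : 'I_n -> V),
    forall v, exists c : 'I_n -> R, v = \sum_(i < n) c i *: g i.

(* X is in add W : a direct summand of a finite direct sum W^n. *)
Definition in_add (R : pzRingType) (W X : lmodType R) : Prop :=
  exists (n : nat) (s : {linear X -> {ffun 'I_n -> W}})
         (p : {linear {ffun 'I_n -> W} -> X}),
    forall x, p (s x) = x.

(* For a submodule U of O (given by a predicate P), the inclusion U -> O is a
   left add W-approximation of U: every R-linear map U -> X with X in add W
   extends along the inclusion. A linear map U -> X is encoded as a function
   O -> X whose restriction to U is R-linear (values off U irrelevant). *)
Definition incl_left_approx (R : pzRingType) (W O : lmodType R) (P : O -> Prop)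
  : Prop :=
  forall (X : lmodType R), in_add W X ->
  forall g : O -> X,
    (forall x y, P x -> P y -> g (x + y) = g x + g y) ->
    (forall (r : R) x, P x -> g (r *: x) = r *: g x) ->
    exists h : {linear O -> X}, forall x, P x -> h x = g x.

Definition img (R : pzRingType) (A B : lmodType R) (f : A -> B) : B -> Prop :=
  fun y => exists x, y = f x.

(* ker f is contained in im g, i.e. exactness at the middle term
   (given that the sequence is a complex). *)
Definition exact_at (R : pzRingType) (A B C : lmodType R)
  (g : A -> B) (f : B -> C) : Prop :=
  forall y, f y = 0 -> img g y.

(* A complex 0 -> Z --f1--> w_1 --f_2--> w_2 -> ... with w_i in add W and each
   Im f_i -> w_i a left add W-approximation of Im f_i.
   Indexing: w_{i+1} = O i, f_1 = f1, f_{i+2} = f i : O i -> O i.+1. *)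
Definition approx_complex (R : pzRingType) (W Z : lmodType R)
  (O : nat -> lmodType R) (f1 : {linear Z -> O 0%N})
  (f : forall i, {linear O i -> O i.+1}) : Prop :=
  [/\ forall i, in_add W (O i),
      (forall z, f 0%N (f1 z) = 0),
      (forall i x, f i.+1 (f i x) = 0),
      incl_left_approx W (img f1) &
      forall i, incl_left_approx W (img (f i))].

(* l.app_W Z >= m (m positive): some such complex is exact up to w_m, i.e.
   0 -> Z -> w_1 -> ... -> w_m is exact (at Z, w_1, ..., w_{m-1}). *)
Definition lapp_ge (R : pzRingType) (W Z : lmodType R) (m : nat) : Prop :=
  exists (O : nat -> lmodType R) (f1 : {linear Z -> O 0%N})
         (f : forall i, {linear O i -> O i.+1}),
    [/\ approx_complex W f1 f,
        injective f1,
        ((1 < m)%N -> exact_at f1 (f 0%N)) &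
        (forall i, (i.+3 <= m)%N -> exact_at (f i) (f i.+1))].

Definition lapp_inf (R : pzRingType) (W Z : lmodType R) : Prop :=
  exists (O : nat -> lmodType R) (f1 : {linear Z -> O 0%N})
         (f : forall i, {linear O i -> O i.+1}),
    [/\ approx_complex W f1 f,
        injective f1,
        exact_at f1 (f 0%N) &
        (forall i, exact_at (f i) (f i.+1))].

(* If e : M -> w_1 is a left add w-approximation of M = M1 (+) M2, its restriction
   to M1 is one of M1. Lift the projection of e(M) onto e(M1) to an endomorphism p
   of w_1; when the complex is exact at w_1, the map d z := (f_2 z, z - p z) from
   w_1 to w_2 (+) w_1 has kernel exactly e(M1), and its image is a direct summand
   of Im f_2 (+) w_1. The latter has the approximation complex
   Im f_2 (+) w_1 -> w_2 (+) w_1 -> w_3 -> w_4 -> ..., exact one step less far, so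
   the argument repeats with Im d in place of M1. Splicing the successive maps d
   yields a complex for M1 that is exact as far as the original one. *)

From HB Require Import structures.
From mathcomp Require Import all_boot all_order all_algebra.
From Stdlib Require Import Classical ClassicalEpsilon.
Set Implicit Arguments. Unset Strict Implicit. Unset Printing Implicit Defensive.
Import GRing.Theory.
Local Open Scope ring_scope.

Section ApproximationSequences.
Variables (R : pzRingType) (W : lmodType R).

Definition linear_of (U V : lmodType R) (f : U -> V) (fL : linear f) :
  {linear U -> V} := HB.pack f (GRing.isLinear.Build R U V _ f fL).
Arguments linear_of {U V} f fL.

Definition linear_pair (U V1 V2 : lmodType R)
    (f : {linear U -> V1}) (g : {linear U -> V2}) : {linear U -> (V1 * V2)%type} :=
  linear_of (fun u => (f u, g u)) (fun a u v => ltac:(by rewrite /= !linearP)).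

Lemma in_add_prod (A B : lmodType R) :
  in_add W A -> in_add W B -> in_add W (A * B)%type.
Proof.
move=> [n [sA [pA sAK]]] [k [sB [pB sBK]]].
pose s (v : A * B) : {ffun 'I_(n + k) -> W} :=
  [ffun i => match split i with inl j => sA v.1 j | inr j => sB v.2 j end].
have sL : linear s.
  move=> a u v; apply/ffunP => i; rewrite !ffunE.
  by case: (split i) => j; rewrite linearP !ffunE.
pose p (w : {ffun 'I_(n + k) -> W}) : A * B :=
  (pA [ffun j => w (lshift k j)], pB [ffun j => w (rshift n j)]).
have pL : linear p.
  move=> a u v; apply: injective_projections; rewrite /= -linearP;
    by congr (_ _); apply/ffunP => j; rewrite !ffunE.
exists (n + k)%N, (linear_of s sL), (linear_of p pL) => v.
apply: injective_projections => /=.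
- by rewrite -[RHS]sAK; congr (pA _); apply/ffunP => j; rewrite !ffunE (unsplitK (inl j)).
- by rewrite -[RHS]sBK; congr (pB _); apply/ffunP => j; rewrite !ffunE (unsplitK (inr j)).
Qed.

Lemma in_add_rV0 : in_add W 'rV[R]_0.
Proof. by exists 0%N, \0, \0 => x; rewrite (thinmx0 x). Qed.

Definition is_submodule (V : lmodType R) (P : V -> Prop) : Prop :=
  [/\ P 0, forall x y, P x -> P y -> P (x + y) & forall a x, P x -> P (a *: x)].

Lemma is_submoduleB (V : lmodType R) (P : V -> Prop) x y :
  is_submodule P -> P x -> P y -> P (x - y).
Proof. by case=> _ PD PZ Px Py; rewrite -scaleN1r; apply/PD/PZ. Qed.

Lemma is_submodule_img (U V : lmodType R) (f : {linear U -> V}) :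
  is_submodule (img f).
Proof.
split; first by exists 0; rewrite linear0.
- by move=> _ _ [x ->] [y ->]; exists (x + y); rewrite linearD.
- by move=> a _ [x ->]; exists (a *: x); rewrite linearZ.
Qed.

Definition img_on (U V : lmodType R) (P : U -> Prop) (e : U -> V) : V -> Prop :=
  fun y => exists2 x, P x & y = e x.

Lemma img_on_True (U V : lmodType R) (f : U -> V) y :
  img f y <-> img_on (fun _ => True) f y.
Proof. by split=> [[x ->]|[x _ ->]]; exists x. Qed.

Lemma incl_left_approx_ext (O : lmodType R) (P Q : O -> Prop) :
  incl_left_approx W P -> (forall y, P y <-> Q y) -> incl_left_approx W Q.
Proof.
move=> appP PQ X addX g gD gZ.
have [h hE] := appP X addX g (fun x y Px Py => gD x y (proj1 (PQ x) Px) (proj1 (PQ y) Py))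
  (fun a x Px => gZ a x (proj1 (PQ x) Px)).
by exists h => x /PQ /hE.
Qed.

Lemma incl_left_approx_prodT (O C : lmodType R) (P : O -> Prop) :
  P 0 -> incl_left_approx W P -> incl_left_approx W (fun v : O * C => P v.1).
Proof.
move=> P0 appP X addX g gD gZ.
have [h1 h1E] : exists h1 : {linear O -> X}, forall a, P a -> h1 a = g (a, 0).
  apply: appP => // [a b Pa Pb|r a Pa]; [rewrite -gD // | rewrite -gZ //];
    by congr g; apply: injective_projections; rewrite /= ?addr0 ?scaler0.
have h2L : linear (fun c : C => g (0, c)).
  move=> a c c'.
  have -> : ((0, a *: c + c') : O * C) = a *: (0, c) + (0, c').
    by apply: injective_projections; rewrite /= ?scaler0 ?addr0.
  by rewrite gD ?gZ //= scaler0.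
exists ((h1 \o fst) \+ (linear_of _ h2L \o snd)) => -[a c] /= Pa.
rewrite h1E // -gD //=.
by congr g; apply: injective_projections; rewrite /= ?addr0 ?add0r.
Qed.

Lemma incl_left_approx_prod0 (O C : lmodType R) (P : O -> Prop) :
  incl_left_approx W P -> incl_left_approx W (fun v : O * C => P v.1 /\ v.2 = 0).
Proof.
move=> appP X addX g gD gZ.
have [h hE] : exists h : {linear O -> X}, forall a, P a -> h a = g (a, 0).
  apply: appP => // [a b Pa Pb|r a Pa]; [rewrite -gD // | rewrite -gZ //];
    by congr g; apply: injective_projections; rewrite /= ?addr0 ?scaler0.
by exists (h \o fst) => -[a c] /= [Pa ->]; apply: hE.
Qed.

Lemma left_approx_factor (V O X : lmodType R) (P : V -> Prop)
    (e : {linear V -> O}) (u : V -> X) :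
  is_submodule P -> incl_left_approx W (img_on P e) -> in_add W X ->
  (forall x y, P x -> P y -> u (x + y) = u x + u y) ->
  (forall a x, P x -> u (a *: x) = a *: u x) ->
  (forall y, P y -> e y = 0 -> u y = 0) ->
  exists h : {linear O -> X}, forall y, P y -> h (e y) = u y.
Proof.
move=> subP appr addX uD uZ uK; have [_ PD PZ] := subP.
have u_fiber y y' : P y -> P y' -> e y = e y' -> u y = u y'.
  move=> Py Py' eyy'; have Pyy' := is_submoduleB subP Py Py'.
  have uyy' : u (y - y') = 0 by apply: uK; rewrite // linearB eyy' subrr.
  by rewrite -[y](subrK y') uD // uyy' add0r.
(* [u] is constant on the fibres of [e] over [P], so evaluating it at any
   chosen preimage is well defined. *)
pose pre (z : O) := epsilon (inhabits 0) (fun y => P y /\ z = e y).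
have preE y : P y -> u (pre (e y)) = u y.
  move=> Py; have [Ppre epre] : P (pre (e y)) /\ e y = e (pre (e y)).
    by apply: (epsilon_spec (inhabits 0) (fun x => P x /\ e y = e x)); exists y.
  exact: u_fiber.
have [h hE] : exists h : {linear O -> X}, forall z, img_on P e z -> h z = u (pre z).
  apply: appr => // [_ _ [y Py ->] [y' Py' ->]|a _ [y Py ->]].
  - by rewrite -linearD !preE ?uD //; apply: PD.
  - by rewrite -linearZ !preE ?uZ //; apply: PZ.
by exists h => y Py; rewrite hE ?preE //; exists y.
Qed.

Record retract (VX VY : lmodType R) (X : VX -> Prop) (Y : VY -> Prop)
    (s : {linear VX -> VY}) (r : {linear VY -> VX}) : Prop := Retract {
  retract_s : forall x, X x -> Y (s x);
  retract_r : forall y, Y y -> X (r y);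
  retract_rs : forall x, X x -> r (s x) = x }.

Lemma retract_submodule (VX VY : lmodType R) (X : VX -> Prop) (Y : VY -> Prop)
    (s : {linear VX -> VY}) (r : {linear VY -> VX}) :
  retract X Y s r -> is_submodule Y -> is_submodule X.
Proof.
move=> [sXY rYX rsK] [Y0 YD YZ]; split.
- by rewrite -(linear0 r); apply: rYX.
- move=> x x' Xx Xx'; rewrite -(rsK x Xx) -(rsK x' Xx') -linearD.
  by apply/rYX/YD; apply: sXY.
- by move=> a x Xx; rewrite -(rsK x Xx) -linearZ; apply/rYX/YZ/sXY.
Qed.

Lemma left_approx_retract (VX VY O : lmodType R) (X : VX -> Prop) (Y : VY -> Prop)
    (s : {linear VX -> VY}) (r : {linear VY -> VX}) (e : {linear VY -> O}) :
  retract X Y s r -> is_submodule Y -> incl_left_approx W (img_on Y e) ->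
  (forall y, Y y -> e y = 0 -> y = 0) -> incl_left_approx W (img_on X (e \o s)).
Proof.
move=> XY subY appr inj Z addZ g gD gZ.
have [X0 _ _] := retract_submodule XY subY.
have [sXY rYX rsK] := XY.
have imgX x : X x -> img_on X (e \o s) (e (s x)) by exists x.
have g0 : g 0 = 0.
  by rewrite -(scale0r (0 : O)) gZ ?scale0r //; exists 0; rewrite //= !linear0.
have [h hE] : exists h : {linear O -> Z}, forall y, Y y -> h (e y) = g (e (s (r y))).
  apply: left_approx_factor => // [y y' Yy Yy'|a y Yy|y Yy /(inj y Yy) ->].
  - by rewrite !linearD gD //; apply/imgX/rYX.
  - by rewrite !linearZ gZ //; apply/imgX/rYX.
  - by rewrite !linear0.
by exists h => _ [x Xx ->]; rewrite /= hE ?rsK //; apply: sXY.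
Qed.

Record approx_seq (Ex : nat -> Prop) (V : lmodType R) (P : V -> Prop)
    (O : nat -> lmodType R) (e : {linear V -> O 0%N})
    (f : forall i, {linear O i -> O i.+1}) : Prop := ApproxSeq {
  aps_submodule : is_submodule P;
  aps_add : forall i, in_add W (O i);
  aps_cx0 : forall z, P z -> f 0%N (e z) = 0;
  aps_cx : forall i x, f i.+1 (f i x) = 0;
  aps_approx0 : incl_left_approx W (img_on P e);
  aps_approx : forall i, incl_left_approx W (img (f i));
  aps_inj : forall z, P z -> e z = 0 -> z = 0;
  aps_exact0 : Ex 0%N -> forall y, f 0%N y = 0 -> img_on P e y;
  aps_exact : forall i, Ex i.+1 -> exact_at (f i) (f i.+1) }.

Section ApproxSeqConstructions.
Variables (Ex : nat -> Prop) (V : lmodType R) (P : V -> Prop).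
Variables (O : nat -> lmodType R) (e : {linear V -> O 0%N}).
Variable f : forall i, {linear O i -> O i.+1}.
Hypothesis seqP : approx_seq Ex P e f.

Lemma approx_seq_shift :
  approx_seq (O := fun i => O i.+1) (fun i => Ex i.+1) (img (f 0%N)) idfun
    (fun i => f i.+1).
Proof.
have [_ addO _ cx _ app _ _ ex] := seqP.
split=> //.
- exact: is_submodule_img.
- by move=> _ [x ->]; apply: cx.
- apply: (incl_left_approx_ext (app 0%N)) => y.
  by split=> [Iy|[z Iz ->]]; [exists y|].
- by move=> Ex1 y /(ex 0%N Ex1) Iy; exists y.
- by move=> i; apply: ex.
Qed.

Definition at0 (C : lmodType R) (i : nat) : lmodType R :=
  if i is _.+1 then 'rV[R]_0 else C.

Variable C : lmodType R.
Hypothesis addC : in_add W C.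

Lemma approx_seq_prod :
  approx_seq (O := fun i => (O i * at0 C i)%type) Ex (fun v : V * C => P v.1)
    (linear_pair (e \o fst) snd) (fun i => linear_pair (f i \o fst) \0).
Proof.
have [[P0 PD PZ] addO cx0 cx app0 app inj ex0 ex] := seqP.
split.
- by split=> [|x y|a x] /=; [apply: P0|apply: PD|apply: PZ].
- by move=> [|i]; apply: in_add_prod => //; apply: in_add_rV0.
- by move=> z Pz; apply: injective_projections => //=; apply: cx0.
- by move=> i x; apply: injective_projections => //=; apply: cx.
- apply: (incl_left_approx_ext (incl_left_approx_prodT (C := C) _ app0)) => [|v].
  + by exists 0; rewrite ?linear0.
  + split=> [[x Px xE]|[[x c] Px ->]]; last by exists x.
    by exists (x, v.2); rewrite //=; apply: injective_projections.
- move=> i.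
  apply: (incl_left_approx_ext (incl_left_approx_prod0 (C := at0 C i.+1) (app i))).
  move=> [a c].
  split=> [[[x /= ->] /= ->]|[[x c'] E]].
    by exists (x, 0); apply: injective_projections.
  by split; [exists x; apply: (congr1 fst E) | apply: (congr1 snd E)].
- by move=> [x c] /= Px [/(inj x Px) -> ->].
- by move=> E0 [a c] /(congr1 fst) /= /(ex0 E0) [x Px ->]; exists (x, c).
- move=> i Ei [a z] /(congr1 fst) /= /(ex i Ei) [b ->]; exists (b, 0).
  by apply: injective_projections => //=; apply: thinmx0.
Qed.

End ApproxSeqConstructions.

Section SummandStep.
Variables (VX VY : lmodType R) (X : VX -> Prop) (Y : VY -> Prop).
Variables (s : {linear VX -> VY}) (r : {linear VY -> VX}).
Variables (Ex : nat -> Prop) (O : nat -> lmodType R).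
Variables (e : {linear VY -> O 0%N}) (f : forall i, {linear O i -> O i.+1}).
Hypotheses (XY : retract X Y s r) (seqY : approx_seq Ex Y e f).

Lemma retraction_lift :
  exists p : {linear O 0%N -> O 0%N}, forall y, Y y -> p (e y) = e (s (r y)).
Proof.
have [subY addO _ _ app0 _ inj _ _] := seqY.
apply: (left_approx_factor (u := fun y => e (s (r y)))) => //.
- by move=> y y' _ _; rewrite !linearD.
- by move=> a y _; rewrite !linearZ.
- by move=> y Yy /(inj y Yy) ->; rewrite !linear0.
Qed.

Section ExactStep.
Hypothesis Ex0 : Ex 0%N.
Variable p : {linear O 0%N -> O 0%N}.
Hypothesis pE : forall y, Y y -> p (e y) = e (s (r y)).

Definition step_map : {linear O 0%N -> (O 1%N * O 0%N)%type} :=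
  linear_pair (f 0%N) (idfun \- p).

Lemma step_map_emb x : X x -> step_map (e (s x)) = 0.
Proof.
move=> Xx; have Ysx := retract_s XY Xx.
apply: injective_projections => /=; first exact: (aps_cx0 seqY).
by rewrite pE // (retract_rs XY Xx) subrr.
Qed.

Lemma step_map_ker z : step_map z = 0 -> img_on X (e \o s) z.
Proof.
move=> dz; have f0z : f 0%N z = 0 := congr1 fst dz.
have pz : z - p z = 0 := congr1 snd dz.
have [y Yy zE] := aps_exact0 seqY Ex0 f0z.
have Ysry : Y (s (r y)) by apply/(retract_s XY)/(retract_r XY).
have yE : y - s (r y) = 0.
  apply: (aps_inj seqY); first exact: is_submoduleB (aps_submodule seqY) Yy Ysry.
  by rewrite linearB -pE // -zE; exact: pz.
exists (r y); first exact: (retract_r XY).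
by rewrite zE /=; apply/eqP; rewrite -subr_eq0 -linearB yE linear0.
Qed.

Lemma complement_lift : exists mu : {linear O 1%N -> (O 1%N * O 0%N)%type},
  forall z, mu (f 0%N z) = step_map (p z).
Proof.
have [_ addO _ _ _ app _ ex0 _] := seqY.
have [mu muE] : exists mu : {linear O 1%N -> (O 1%N * O 0%N)%type},
    forall z, True -> mu (f 0%N z) = step_map (p z).
  apply: left_approx_factor.
  - by [].
  - by apply: (incl_left_approx_ext (app 0%N)) => y; apply: img_on_True.
  - exact: in_add_prod.
  - by move=> z z' _ _; rewrite !linearD.
  - by move=> a z _; rewrite !linearZ.
  - move=> z _ /(ex0 Ex0) [y Yy ->].
    by rewrite pE // step_map_emb //; apply: (retract_r XY).
by exists mu => z; apply: muE.
Qed.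

Variable mu : {linear O 1%N -> (O 1%N * O 0%N)%type}.
Hypothesis muE : forall z, mu (f 0%N z) = step_map (p z).

Definition step_retraction :
    {linear (O 1%N * O 0%N)%type -> (O 1%N * O 0%N)%type} :=
  (step_map \o snd) \+ (mu \o fst).

Lemma retract_step :
  retract (img step_map) (fun v => img (f 0%N) v.1) idfun step_retraction.
Proof.
split.
- by move=> _ [z ->]; exists z.
- move=> [a b] [z aE]; exists (b + p z).
  have -> : step_retraction (a, b) = step_map b + mu a by [].
  by rewrite linearD -muE -aE.
- move=> _ [z ->].
  have -> : step_retraction (step_map z) = step_map (z - p z) + mu (f 0%N z) by [].
  by rewrite muE -linearD subrK.
Qed.

End ExactStep.

Lemma summand_step :
  exists (d : {linear O 0%N -> (O 1%N * O 0%N)%type})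
         (r' : {linear (O 1%N * O 0%N)%type -> (O 1%N * O 0%N)%type}),
    [/\ forall x, X x -> d (e (s x)) = 0,
        Ex 0%N -> forall z, d z = 0 -> img_on X (e \o s) z &
        retract (img d) (fun v => img (f 0%N) v.1) idfun r'].
Proof.
have [Ex0|NEx0] := classic (Ex 0%N); last first.
  (* Nothing is asked beyond the exact range: the zero map will do. *)
  exists \0, \0; split=> //; split=> [_ [z ->]|y _|_ [z ->]] //.
  - by exists 0; rewrite /= linear0.
  - by exists 0.
have [p pE] := retraction_lift.
have [mu muE] := complement_lift Ex0 pE.
exists (step_map p), (step_retraction p mu); split.
- exact: step_map_emb.
- by move=> _; apply: step_map_ker.
- exact: retract_step.
Qed.

End SummandStep.

Record stage := Stage {
  st_VX : lmodType R; st_X : st_VX -> Prop;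
  st_VY : lmodType R; st_Y : st_VY -> Prop;
  st_s : {linear st_VX -> st_VY}; st_r : {linear st_VY -> st_VX};
  st_Ex : nat -> Prop; st_O : nat -> lmodType R;
  st_e : {linear st_VY -> st_O 0%N}; st_f : forall i, {linear st_O i -> st_O i.+1};
  st_retract : retract st_X st_Y st_s st_r;
  st_seq : approx_seq st_Ex st_Y st_e st_f }.
Arguments st_X : clear implicits.
Arguments st_s : clear implicits.
Arguments st_e : clear implicits.
Arguments st_retract : clear implicits.
Arguments st_seq : clear implicits.

Definition stage_emb (S : stage) : {linear st_VX S -> st_O S 0%N} :=
  st_e S \o st_s S.

Lemma stage_emb_inj S x : st_X S x -> stage_emb S x = 0 -> x = 0.
Proof.
move=> Xx /(aps_inj (st_seq S) (retract_s (st_retract S) Xx)) sx0.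
by rewrite -(retract_rs (st_retract S) Xx) sx0 linear0.
Qed.

Lemma stage_emb_approx S : incl_left_approx W (img_on (st_X S) (stage_emb S)).
Proof.
have [subY _ _ _ app0 _ inj _ _] := st_seq S.
exact: left_approx_retract (st_retract S) subY app0 inj.
Qed.

Definition stage_link (S T : stage) (d : {linear st_O S 0%N -> st_VX T}) : Prop :=
  [/\ forall i, st_Ex T i <-> st_Ex S i.+1,
      forall v, st_X T v <-> img d v,
      forall x, st_X S x -> d (stage_emb S x) = 0 &
      st_Ex S 0%N -> forall z, d z = 0 -> img_on (st_X S) (stage_emb S) z].

Lemma stage_step (S : stage) :
  exists L : {T : stage & {linear st_O S 0%N -> st_VX T}}, stage_link (projT2 L).
Proof.
case: S => VX X VY Y s r Ex O e f XY seqY.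
have [d [r' [d_emb d_ker dY]]] := summand_step XY seqY.
pose T := Stage dY (approx_seq_prod (approx_seq_shift seqY) (aps_add seqY 0%N)).
by exists (existT _ T d); split.
Qed.

Definition next_stage_link (S : stage) :=
  proj1_sig (constructive_indefinite_description _ (stage_step S)).

Definition next_stage (S : stage) : stage := projT1 (next_stage_link S).

Definition stage_map (S : stage) : {linear st_O S 0%N -> st_VX (next_stage S)} :=
  projT2 (next_stage_link S).

Lemma stage_mapP (S : stage) : stage_link (stage_map S).
Proof. exact: (proj2_sig (constructive_indefinite_description _ (stage_step S))). Qed.

Section Chain.
Variable S0 : stage.

Definition chain (k : nat) : stage := iter k next_stage S0.

Definition chain_map k : {linear st_O (chain k) 0%N -> st_O (chain k.+1) 0%N} :=
  stage_emb (chain k.+1) \o stage_map (chain k).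

Lemma chain_Ex k i : st_Ex (chain k) i <-> st_Ex S0 (k + i).
Proof.
elim: k i => [//|k IHk] i; rewrite addSnnS.
have [Ek _ _ _] := stage_mapP (chain k).
exact: iff_trans (Ek i) (IHk i.+1).
Qed.

Lemma chain_map_ker k y : chain_map k y = 0 -> stage_map (chain k) y = 0.
Proof.
have [_ Xk _ _] := stage_mapP (chain k).
by apply: stage_emb_inj; apply/Xk; exists y.
Qed.

Lemma chain_seq :
  approx_seq (O := fun k => st_O (chain k) 0%N) (st_Ex S0) (st_X S0)
    (stage_emb S0) chain_map.
Proof.
have link k := stage_mapP (chain k).
split.
- exact: retract_submodule (st_retract S0) (aps_submodule (st_seq S0)).
- by move=> k; apply: (aps_add (st_seq (chain k)) 0%N).
- have [_ _ d_emb _] := link 0%N.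
  by move=> x Xx; rewrite /chain_map /= d_emb ?linear0.
- move=> k x; have [_ Xk _ _] := link k; have [_ _ d_emb _] := link k.+1.
  by rewrite /chain_map /= d_emb ?linear0 //; apply/Xk; exists x.
- exact: stage_emb_approx.
- move=> k; apply: (incl_left_approx_ext (@stage_emb_approx (chain k.+1))) => y.
  have [_ Xk _ _] := link k; split.
  + by case=> x /Xk [z ->] ->; exists z.
  + by case=> z ->; exists (stage_map (chain k) z) => //; apply/Xk; exists z.
- exact: stage_emb_inj.
- have [_ _ _ d_ker] := link 0%N.
  by move=> Ex0 y /chain_map_ker; apply: d_ker.
- move=> k Ek y /chain_map_ker; have [_ Xk _ _] := link k.
  have [_ _ _ d_ker] := link k.+1.
  have Ek0 : st_Ex (chain k.+1) 0%N by apply/chain_Ex; rewrite addn0.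
  by case/(d_ker Ek0) => x /Xk [z ->] ->; exists z.
Qed.

End Chain.

Lemma approx_seqT (Z : lmodType R) (Ex : nat -> Prop) (O : nat -> lmodType R)
    (e : {linear Z -> O 0%N}) (f : forall i, {linear O i -> O i.+1}) :
  approx_seq Ex (fun _ => True) e f <->
  [/\ approx_complex W e f, injective e, Ex 0%N -> exact_at e (f 0%N) &
      forall i, Ex i.+1 -> exact_at (f i) (f i.+1)].
Proof.
split=> [[_ addO cx0 cx app0 app inj ex0 ex]|[[addO cx0 cx app0 app] inj ex0 ex]].
  split=> //.
  - split=> //; first by move=> z; apply: cx0.
    by apply: (incl_left_approx_ext app0) => y; apply: iff_sym; apply: img_on_True.
  - move=> x y exy; apply/eqP; rewrite -subr_eq0; apply/eqP/inj => //.
    by rewrite linearB exy subrr.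
  - by move=> /ex0 ker y /ker /img_on_True.
split=> //.
- by apply: (incl_left_approx_ext app0) => y; apply: img_on_True.
- by move=> z _ ez; apply: inj; rewrite ez linear0.
- by move=> /ex0 ker y /ker /img_on_True.
Qed.

(* [lapp_ge W Z m] is [lapp_upto (fun i => i.+2 <= m) Z], and [lapp_inf W Z]
   is [lapp_upto (fun _ => True) Z] up to the trivial premises. *)
Definition lapp_upto (Ex : nat -> Prop) (Z : lmodType R) : Prop :=
  exists (O : nat -> lmodType R) (e : {linear Z -> O 0%N})
         (f : forall i, {linear O i -> O i.+1}),
    [/\ approx_complex W e f, injective e, Ex 0%N -> exact_at e (f 0%N) &
        forall i, Ex i.+1 -> exact_at (f i) (f i.+1)].

Lemma lapp_upto_retract (Ex : nat -> Prop) (M1 M : lmodType R)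
    (s : {linear M1 -> M}) (r : {linear M -> M1}) :
  cancel s r -> lapp_upto Ex M -> lapp_upto Ex M1.
Proof.
move=> sK [O [e [f /approx_seqT seqM]]].
have XY : retract (fun _ : M1 => True) (fun _ : M => True) s r by split.
pose S0 := Stage XY seqM.
exists (fun k => st_O (chain S0 k) 0%N), (stage_emb S0), (chain_map S0).
apply/approx_seqT; exact: (chain_seq S0).
Qed.

End ApproximationSequences.

Theorem lemma2p1 (R : pzRingType) (W M1 M2 : lmodType R) :
  artin_algebra R -> fin_gen W -> fin_gen M1 -> fin_gen M2 ->
  (forall m : nat, (0 < m)%N ->
     lapp_ge W (M1 * M2)%type m -> lapp_ge W M1 m) /\
  (lapp_inf W (M1 * M2)%type -> lapp_inf W M1).
Proof.
move=> _ _ _ _.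
have inlK : cancel (linear_pair idfun \0 : {linear M1 -> (M1 * M2)%type}) fst by [].
split=> [m _|[O [e [f [cx inj ex0 ex]]]]].
  exact: (lapp_upto_retract (Ex := fun i => (i.+2 <= m)%N) inlK).
have [O' [e' [f' [cx' inj' ex0' ex']]]] : lapp_upto W (fun _ => True) M1.
  by apply: lapp_upto_retract inlK _; exists O, e, f; split.
by exists O', e', f'; split=> // [|i]; [apply: ex0' | apply: ex'].
Qed.
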